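(* Let $n\ge3$, let $0<r<r_n$, let $v$ be a vertex of $P_n$ and let $p\in P_n$ be arbitrary. Then $d_{P_n}(v,g_r(v))\le d_{P_n}(p,g_r(p))$.
   Context: $P_n$ is the boundary of the regular polygon in $\mathbb{R}^2$ whose vertices are the $n$-th roots of unity (its vertices), with the Euclidean metric $\|x-y\|$. $d_{P_n}(x,y)\in[0,1)$ is the counterclockwise arc length of $P_n$ from $x$ to $y$ divided by the perimeter. The directed Vietoris–Rips graph $\mathrm{VR}_<(P_n;r)$ has vertex set $P_n$ and, for distinct $u,w$ with $\|u-w\|<r$, the edge $u\to w$ if $d_{P_n}(u,w)<d_{P_n}(w,u)$, else $w\to u$; it is cyclic if whenever $u_0\to u_1$, every $w$ strictly counterclockwise-between $u_0,u_1$ has $u_0\to w$ and $w\to u_1$. $r_n=\sup\{r\ge0:\mathrm{VR}_<(P_n;r')\text{ is cyclic for all }0<r'<r\}$. For $0<r<r_n$ and $p\in P_n$, $g_r(p)$ is the first point $w$ met when moving counterclockwise from $p$ along $P_n$ with $\|p-w\|=r$. *)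

From Stdlib Require Import Reals.
From Coquelicot Require Import Coquelicot.
Open Scope R_scope.

Definition frac (x : R) : R := x - IZR (Int_part x).

Definition omega (n : nat) (k : Z) : R * R :=
  (cos (2 * PI * IZR k / INR n), sin (2 * PI * IZR k / INR n)).

(* Arc-length parametrization of P_n by t in [0,1): gamma n t is the point at
   (normalized) counterclockwise arc length t from the vertex omega_0 = 1.
   Since all edges have equal length, on edge k (n t in [k,k+1)) the point is
   the affine combination (1-s) omega_k + s omega_(k+1), s = n t - k. *)
Definition gamma (n : nat) (t : R) : R * R :=
  let k := Int_part (INR n * t) in
  let s := INR n * t - IZR k in
  let a := omega n k in
  let b := omega n (k + 1)%Z in
  ((1 - s) * fst a + s * fst b, (1 - s) * snd a + s * snd b).

(* Parameter domain: the points of P_n correspond bijectively to t in [0,1). *)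
Definition in_P (t : R) : Prop := 0 <= t < 1.

Definition eucl (x y : R * R) : R :=
  sqrt ((fst x - fst y) ^ 2 + (snd x - snd y) ^ 2).

Definition pdist (n : nat) (t u : R) : R := eucl (gamma n t) (gamma n u).

(* d_{P_n}(x,y): counterclockwise arc length from x to y divided by the
   perimeter, in [0,1). *)
Definition dP (t u : R) : R := frac (u - t).

(* Directed edge u -> w of VR_<(P_n; r).  For the distinct pair {u,w} with
   ||u-w|| < r: u -> w if d(u,w) < d(w,u), else w -> u.  Applying the rule to
   both orderings, u -> w holds exactly when d(u,w) <= d(w,u). *)
Definition arrow (n : nat) (r : R) (u w : R) : Prop :=
  u <> w /\ pdist n u w < r /\ dP u w <= dP w u.

Definition strictly_between (u0 w u1 : R) : Prop :=
  w <> u0 /\ w <> u1 /\ dP u0 w < dP u0 u1.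

Definition cyclic (n : nat) (r : R) : Prop :=
  forall u0 u1, in_P u0 -> in_P u1 -> arrow n r u0 u1 ->
  forall w, in_P w -> strictly_between u0 w u1 ->
    arrow n r u0 w /\ arrow n r w u1.

Definition r_crit (n : nat) : Rbar :=
  Lub_Rbar (fun r => 0 <= r /\ forall r', 0 < r' < r -> cyclic n r').

(* is_g n r p w : w (a point of P_n) is g_r(p), the first point met moving
   counterclockwise from p with ||p - w|| = r. *)
Definition is_g (n : nat) (r : R) (p w : R) : Prop :=
  in_P w /\ pdist n p w = r /\
  forall w', in_P w' -> pdist n p w' = r -> dP p w <= dP p w'.

From Stdlib Require Import Reals Lra Lia ZArith.
From Coquelicot Require Import Coquelicot.
Open Scope R_scope.

(* For a fixed arc length l, compare the point of P_n at arc parameter x with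
   the one at x + l.  While both stay on fixed edges, the chord vector between
   them is affine in x, so by convexity of the squared norm the chord is longest
   when one of its ends is a vertex; by the rotational and reflection symmetry
   of P_n that longest chord is the vertex chord c(l).  Hence if g_r(p) lies at
   arc length L from p then r <= c(L); as c(0) = 0, the intermediate value
   theorem gives an arc length z <= L with c(z) = r, i.e. a point at distance r
   from the vertex v and at arc length z from it, so g_r(v) comes no later. *)

Lemma frac_bounds (x : R) : 0 <= frac x < 1.
Proof. unfold frac; destruct (base_Int_part x); lra. Qed.

Lemma Int_part_IZR_add (i : Z) (s : R) : 0 <= s < 1 -> Int_part (IZR i + s) = i.
Proof. intros Hs; symmetry; apply Int_part_spec; lra. Qed.

Lemma frac_IZR_add (i : Z) (s : R) : 0 <= s < 1 -> frac (IZR i + s) = s.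
Proof. intros Hs; unfold frac; rewrite Int_part_IZR_add by exact Hs; ring. Qed.

Lemma frac_id (x : R) : 0 <= x < 1 -> frac x = x.
Proof. intros Hx; rewrite <- (Rplus_0_l x) at 1; apply (frac_IZR_add 0 x Hx). Qed.

Lemma Int_part_frac (x : R) : x = IZR (Int_part x) + frac x.
Proof. unfold frac; ring. Qed.

Lemma frac_add_int (x : R) (m : Z) : frac (x + IZR m) = frac x.
Proof.
  rewrite (Int_part_frac x) at 1.
  replace (IZR (Int_part x) + frac x + IZR m) with (IZR (Int_part x + m) + frac x)
    by (rewrite plus_IZR; ring).
  apply frac_IZR_add, frac_bounds.
Qed.

Definition lerp (c : Z -> R) (x : R) : R :=
  (1 - frac x) * c (Int_part x) + frac x * c (Int_part x + 1)%Z.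

Lemma lerp_cell (c : Z -> R) (i : Z) (s : R) :
  0 <= s <= 1 -> lerp c (IZR i + s) = (1 - s) * c i + s * c (i + 1)%Z.
Proof.
  intros Hs; destruct (Req_dec s 1) as [->|Hs1].
  - replace (IZR i + 1) with (IZR (i + 1) + 0) by (rewrite plus_IZR; ring).
    unfold lerp; rewrite frac_IZR_add, Int_part_IZR_add by lra; ring.
  - unfold lerp; rewrite frac_IZR_add, Int_part_IZR_add by lra; reflexivity.
Qed.

Lemma lerp_near (c : Z -> R) (K : Z) (x : R) :
  IZR K - 1 <= x <= IZR K + 1 ->
  lerp c x = c K + (x - IZR K) * (c (K + 1)%Z - c (K - 1)%Z) / 2
                 + Rabs (x - IZR K) * (c (K + 1)%Z - 2 * c K + c (K - 1)%Z) / 2.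
Proof.
  intros Hx; destruct (Rle_lt_dec (IZR K) x) as [HK|HK].
  - replace x with (IZR K + (x - IZR K)) at 1 by ring.
    rewrite lerp_cell, Rabs_pos_eq by lra; field.
  - replace x with (IZR (K - 1) + (x - IZR K + 1)) at 1 by (rewrite minus_IZR; ring).
    rewrite lerp_cell, Z.sub_add, Rabs_left by lra; field.
Qed.

Lemma lerp_continuous (c : Z -> R) (x : R) : continuity_pt (lerp c) x.
Proof.
  assert (HK : IZR (Int_part x) - 1 < x < IZR (Int_part x) + 1)
    by (pose proof (frac_bounds x); unfold frac in *; lra).
  set (K := Int_part x) in HK.
  set (A := (c (K + 1)%Z - c (K - 1)%Z) / 2).
  set (B := (c (K + 1)%Z - 2 * c K + c (K - 1)%Z) / 2).
  apply continuity_pt_filterlim,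
    (continuous_ext_loc _ (fun y => c K + (y - IZR K) * A + Rabs (y - IZR K) * B)).
  - apply (locally_interval _ x (IZR K - 1) (IZR K + 1)); simpl; try lra.
    intros y Hy1 Hy2; rewrite (lerp_near c K y) by lra; unfold A, B; field.
  - apply continuity_pt_filterlim.
    apply (continuity_pt_plus (fun y => c K + (y - IZR K) * A) (fun y => Rabs (y - IZR K) * B));
      [reg|].
    apply (continuity_pt_mult (fun y => Rabs (y - IZR K)) (fun _ => B)); [|reg].
    apply (continuity_pt_comp (fun y => y - IZR K) Rabs); [reg|apply Rcontinuity_abs].
Qed.

Definition comb (l : R) (p q : R * R) : R * R :=
  ((1 - l) * fst p + l * fst q, (1 - l) * snd p + l * snd q).

Definition rot (a : R) (p : R * R) : R * R :=
  (cos a * fst p - sin a * snd p, sin a * fst p + cos a * snd p).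

Definition conj (p : R * R) : R * R := (fst p, - snd p).

Definition sqdist (p q : R * R) : R := (fst p - fst q) ^ 2 + (snd p - snd q) ^ 2.

Lemma sqdist_ge0 (p q : R * R) : 0 <= sqdist p q.
Proof. unfold sqdist; apply Rplus_le_le_0_compat; apply pow2_ge_0. Qed.

Lemma sqdist_sym (p q : R * R) : sqdist p q = sqdist q p.
Proof. unfold sqdist; ring. Qed.

Lemma sqdist_rot (a : R) (p q : R * R) : sqdist (rot a p) (rot a q) = sqdist p q.
Proof.
  unfold sqdist, rot; simpl.
  transitivity ((sin a ^ 2 + cos a ^ 2) * ((fst p - fst q) ^ 2 + (snd p - snd q) ^ 2)); [ring|].
  replace (sin a ^ 2 + cos a ^ 2) with 1 by (rewrite <- (sin2_cos2 a); unfold Rsqr; ring); ring.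
Qed.

Lemma sqdist_conj (p q : R * R) : sqdist (conj p) (conj q) = sqdist p q.
Proof. unfold sqdist, conj; simpl; ring. Qed.

Lemma rot_comb (a l : R) (p q : R * R) : rot a (comb l p q) = comb l (rot a p) (rot a q).
Proof. unfold rot, comb; simpl; f_equal; ring. Qed.

Lemma conj_comb (l : R) (p q : R * R) : conj (comb l p q) = comb l (conj p) (conj q).
Proof. unfold conj, comb; simpl; f_equal; ring. Qed.

Lemma comb_swap (l : R) (p q : R * R) : comb (1 - l) p q = comb l q p.
Proof. unfold comb; f_equal; ring. Qed.

Lemma comb_comb (l a b : R) (p q : R * R) :
  comb l (comb a p q) (comb b p q) = comb ((1 - l) * a + l * b) p q.
Proof. unfold comb; simpl; f_equal; ring. Qed.

Lemma sqdist_comb_le (l B : R) (p q p' q' : R * R) :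
  0 <= l <= 1 -> sqdist p p' <= B -> sqdist q q' <= B ->
  sqdist (comb l p q) (comb l p' q') <= B.
Proof.
  intros Hl Hp Hq; unfold sqdist, comb in *; simpl in *.
  set (X0 := fst p - fst p') in *; set (Y0 := snd p - snd p') in *.
  set (X1 := fst q - fst q') in *; set (Y1 := snd q - snd q') in *.
  replace ((1 - l) * fst p + l * fst q - ((1 - l) * fst p' + l * fst q'))
    with ((1 - l) * X0 + l * X1) by (unfold X0, X1; ring).
  replace ((1 - l) * snd p + l * snd q - ((1 - l) * snd p' + l * snd q'))
    with ((1 - l) * Y0 + l * Y1) by (unfold Y0, Y1; ring).
  assert (Hmix : 0 <= l * (1 - l) * ((X0 - X1) ^ 2 + (Y0 - Y1) ^ 2))
    by (apply Rmult_le_pos; [nra | apply Rplus_le_le_0_compat; apply pow2_ge_0]).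
  nra.
Qed.

Definition affine_on (F : R -> R * R) (a b : R) : Prop :=
  forall l, 0 <= l <= 1 -> F ((1 - l) * a + l * b) = comb l (F a) (F b).

Lemma affine_on_shift (F : R -> R * R) (a b c : R) :
  affine_on F (a + c) (b + c) -> affine_on (fun u => F (u + c)) a b.
Proof.
  intros HF l Hl; rewrite <- HF by exact Hl; f_equal; ring.
Qed.

Lemma sqdist_affine_le (F G : R -> R * R) (a b B x : R) :
  a < b -> affine_on F a b -> affine_on G a b ->
  sqdist (F a) (G a) <= B -> sqdist (F b) (G b) <= B ->
  a <= x <= b -> sqdist (F x) (G x) <= B.
Proof.
  intros Hab HF HG Ha Hb Hx.
  set (l := (x - a) / (b - a)).
  assert (Hl : 0 <= l <= 1).
  { unfold l; split; [apply Rdiv_le_0_compat; lra|].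
    unfold Rdiv; rewrite <- (Rinv_r (b - a)) by lra.
    apply Rmult_le_compat_r; [apply Rlt_le, Rinv_0_lt_compat|]; lra. }
  replace x with ((1 - l) * a + l * b) by (unfold l; field; lra).
  rewrite HF, HG by exact Hl; apply sqdist_comb_le; assumption.
Qed.

Lemma cos_sin_period_Z (x : R) (m : Z) :
  cos (x + 2 * IZR m * PI) = cos x /\ sin (x + 2 * IZR m * PI) = sin x.
Proof.
  destruct (Z_le_gt_dec 0 m) as [Hm|Hm].
  - rewrite <- (Z2Nat.id m Hm), <- INR_IZR_INZ. split; [apply cos_period|apply sin_period].
  - set (k := Z.to_nat (- m)); replace m with (- Z.of_nat k)%Z by lia.
    rewrite opp_IZR, <- INR_IZR_INZ.
    rewrite <- (cos_period (x + 2 * - INR k * PI) k), <- (sin_period (x + 2 * - INR k * PI) k).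
    replace (x + 2 * - INR k * PI + 2 * INR k * PI) with x by ring; split; reflexivity.
Qed.

(* [polygon n x] is the point of P_n at arc length x measured in edges, with x
   not reduced modulo n. *)
Definition polygon (n : nat) (x : R) : R * R :=
  (lerp (fun k => fst (omega n k)) x, lerp (fun k => snd (omega n k)) x).

Lemma gamma_polygon (n : nat) (t : R) : gamma n t = polygon n (INR n * t).
Proof. reflexivity. Qed.

Lemma pdist_sqdist (n : nat) (t u : R) :
  pdist n t u = sqrt (sqdist (polygon n (INR n * t)) (polygon n (INR n * u))).
Proof. reflexivity. Qed.

Section Polygon.

Variable n : nat.
Hypothesis n_pos : (0 < n)%nat.

Let n_posR : 0 < INR n.
Proof. apply lt_0_INR; exact n_pos. Qed.

Lemma omega_succ (k : Z) : omega n (k + 1) = rot (2 * PI / INR n) (omega n k).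
Proof.
  unfold omega, rot; simpl.
  replace (2 * PI * IZR (k + 1) / INR n) with (2 * PI * IZR k / INR n + 2 * PI / INR n)
    by (rewrite plus_IZR; field; lra).
  rewrite cos_plus, sin_plus; f_equal; ring.
Qed.

Lemma omega_opp (k : Z) : omega n (- k) = conj (omega n k).
Proof.
  unfold omega, conj; simpl.
  replace (2 * PI * IZR (- k) / INR n) with (- (2 * PI * IZR k / INR n))
    by (rewrite opp_IZR; field; lra).
  rewrite cos_neg, sin_neg; reflexivity.
Qed.

Lemma omega_add_mul (k m : Z) : omega n (k + Z.of_nat n * m) = omega n k.
Proof.
  unfold omega.
  replace (2 * PI * IZR (k + Z.of_nat n * m) / INR n) with (2 * PI * IZR k / INR n + 2 * IZR m * PI)
    by (rewrite plus_IZR, mult_IZR, <- INR_IZR_INZ; field; lra).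
  destruct (cos_sin_period_Z (2 * PI * IZR k / INR n) m) as [-> ->]; reflexivity.
Qed.

Lemma polygon_edge (i : Z) (s : R) :
  0 <= s <= 1 -> polygon n (IZR i + s) = comb s (omega n i) (omega n (i + 1)).
Proof. intros Hs; unfold polygon, comb; rewrite !lerp_cell by exact Hs; reflexivity. Qed.

Lemma polygon_frac (x : R) :
  polygon n x = comb (frac x) (omega n (Int_part x)) (omega n (Int_part x + 1)).
Proof. reflexivity. Qed.

Lemma polygon_add_int (x : R) (m : Z) :
  polygon n (x + IZR m) = comb (frac x) (omega n (Int_part x + m)) (omega n (Int_part x + m + 1)).
Proof.
  replace (x + IZR m) with (IZR (Int_part x + m) + frac x)
    by (unfold frac; rewrite plus_IZR; ring).
  apply polygon_edge; pose proof (frac_bounds x); lra.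
Qed.

Lemma polygon_succ (x : R) : polygon n (x + 1) = rot (2 * PI / INR n) (polygon n x).
Proof.
  rewrite (polygon_add_int x 1), polygon_frac, rot_comb, <- !omega_succ; reflexivity.
Qed.

Lemma polygon_periodic (x : R) (m : Z) : polygon n (x + INR n * IZR m) = polygon n x.
Proof.
  rewrite INR_IZR_INZ, <- mult_IZR, polygon_add_int.
  replace (Int_part x + Z.of_nat n * m + 1)%Z with (Int_part x + 1 + Z.of_nat n * m)%Z by ring.
  rewrite !omega_add_mul; reflexivity.
Qed.

Lemma polygon_opp (x : R) : polygon n (- x) = conj (polygon n x).
Proof.
  pose proof (frac_bounds x) as Hs.
  replace (- x) with (IZR (- (Int_part x + 1)) + (1 - frac x))
    by (unfold frac; rewrite opp_IZR, plus_IZR; ring).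
  rewrite polygon_edge by lra.
  replace (- (Int_part x + 1) + 1)%Z with (- Int_part x)%Z by ring.
  rewrite !omega_opp, comb_swap, <- conj_comb; reflexivity.
Qed.

Lemma sqdist_polygon_add_nat (x y : R) (m : nat) :
  sqdist (polygon n (x + INR m)) (polygon n (y + INR m)) = sqdist (polygon n x) (polygon n y).
Proof.
  induction m as [|m IH]; [rewrite !Rplus_0_r; reflexivity|].
  rewrite S_INR, <- !(Rplus_assoc _ (INR m)), !polygon_succ, sqdist_rot; exact IH.
Qed.

Lemma sqdist_polygon_add_int (x y : R) (m : Z) :
  sqdist (polygon n (x + IZR m)) (polygon n (y + IZR m)) = sqdist (polygon n x) (polygon n y).
Proof.
  destruct (Z_le_gt_dec 0 m) as [Hm|Hm].
  - rewrite <- (Z2Nat.id m Hm), <- INR_IZR_INZ; apply sqdist_polygon_add_nat.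
  - set (k := Z.to_nat (- m)); replace m with (- Z.of_nat k)%Z by lia.
    rewrite opp_IZR, <- INR_IZR_INZ, <- (sqdist_polygon_add_nat _ _ k).
    replace (x + - INR k + INR k) with x by ring; replace (y + - INR k + INR k) with y by ring.
    reflexivity.
Qed.

Definition vertex_sqdist (l : R) : R := sqdist (polygon n 0) (polygon n l).

Lemma sqdist_from_vertex (m : Z) (l : R) :
  sqdist (polygon n (IZR m)) (polygon n (IZR m + l)) = vertex_sqdist l.
Proof.
  rewrite (Rplus_comm _ l), <- (Rplus_0_l (IZR m)) at 1.
  apply sqdist_polygon_add_int.
Qed.

Lemma sqdist_to_vertex (m : Z) (l : R) :
  sqdist (polygon n (IZR m - l)) (polygon n (IZR m)) = vertex_sqdist l.
Proof.
  replace (IZR m - l) with (- l + IZR m) by ring.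
  rewrite <- (Rplus_0_l (IZR m)) at 2; rewrite sqdist_polygon_add_int.
  rewrite <- Ropp_0, !polygon_opp, sqdist_conj, sqdist_sym; reflexivity.
Qed.

Lemma polygon_affine_on (i : Z) (a b : R) :
  IZR i <= a <= b -> b <= IZR i + 1 -> affine_on (polygon n) a b.
Proof.
  intros Ha Hb l Hl.
  replace a with (IZR i + (a - IZR i)) at 2 by ring.
  replace b with (IZR i + (b - IZR i)) at 2 by ring.
  replace ((1 - l) * a + l * b) with (IZR i + ((1 - l) * (a - IZR i) + l * (b - IZR i))) by ring.
  rewrite !polygon_edge, comb_comb by nra; reflexivity.
Qed.

Lemma sqdist_polygon_vertex_end (m : Z) (u l : R) :
  u = IZR m \/ u + l = IZR m ->
  sqdist (polygon n u) (polygon n (u + l)) = vertex_sqdist l.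
Proof.
  intros [-> | Hul].
  - apply sqdist_from_vertex.
  - rewrite Hul; replace u with (IZR m - l) by lra; apply sqdist_to_vertex.
Qed.

Lemma sqdist_polygon_le_vertex (x l : R) :
  sqdist (polygon n x) (polygon n (x + l)) <= vertex_sqdist l.
Proof.
  set (i := Int_part x); set (s := frac x).
  set (j := Int_part (x + l)); set (t := frac (x + l)).
  assert (Hx : x = IZR i + s) by apply Int_part_frac.
  assert (Hxl : x + l = IZR j + t) by apply Int_part_frac.
  pose proof (frac_bounds x) as Hs; pose proof (frac_bounds (x + l)) as Ht; fold s t in Hs, Ht.
  set (G := fun u => polygon n (u + l)).
  (* On the chosen interval [a, b], u and u + l each stay on one edge, and at a
     and at b one of them is a vertex. *)
  destruct (Rle_lt_dec s t) as [Hst|Hts].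
  - apply (sqdist_affine_le (polygon n) G (IZR i) (IZR i + 1 - (t - s))).
    + lra.
    + apply (polygon_affine_on i); lra.
    + apply affine_on_shift, (polygon_affine_on j); lra.
    + apply Req_le, (sqdist_polygon_vertex_end i); left; reflexivity.
    + apply Req_le, (sqdist_polygon_vertex_end (j + 1)).
      right; rewrite plus_IZR; lra.
    + lra.
  - apply (sqdist_affine_le (polygon n) G (IZR i + (s - t)) (IZR i + 1)).
    + lra.
    + apply (polygon_affine_on i); lra.
    + apply affine_on_shift, (polygon_affine_on j); lra.
    + apply Req_le, (sqdist_polygon_vertex_end j); right; lra.
    + apply Req_le, (sqdist_polygon_vertex_end (i + 1)).
      left; rewrite plus_IZR; ring.
    + lra.
Qed.

Lemma vertex_sqdist_continuous : continuity (fun z => vertex_sqdist (INR n * z)).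
Proof.
  intros z.
  assert (Hcoord : forall (c : Z -> R) (a : R), continuity_pt (fun z => (a - lerp c (INR n * z)) ^ 2) z).
  { intros c a.
    apply (continuity_pt_comp (fun z => a - lerp c (INR n * z)) (fun y => y ^ 2)); [|reg].
    apply (continuity_pt_minus (fun _ => a) (fun z => lerp c (INR n * z))); [reg|].
    apply (continuity_pt_comp (fun z => INR n * z) (lerp c)); [reg|apply lerp_continuous]. }
  apply (continuity_pt_plus (fun z => (fst (polygon n 0) - lerp (fun k => fst (omega n k)) (INR n * z)) ^ 2)
           (fun z => (snd (polygon n 0) - lerp (fun k => snd (omega n k)) (INR n * z)) ^ 2)); apply Hcoord.
Qed.

Lemma gamma_add_int (t : R) (m : Z) : gamma n (t + IZR m) = gamma n t.
Proof. rewrite !gamma_polygon, Rmult_plus_distr_l; apply polygon_periodic. Qed.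

Lemma pdist_add_int (t u : R) (m : Z) : pdist n t (u + IZR m) = pdist n t u.
Proof. unfold pdist; rewrite gamma_add_int; reflexivity. Qed.

Lemma pdist_dP (t u : R) : pdist n t u = pdist n t (t + dP t u).
Proof.
  rewrite <- (pdist_add_int t (t + dP t u) (Int_part (u - t))).
  unfold dP, frac; f_equal; ring.
Qed.

Lemma pdist_sqr_le_vertex (t u : R) : pdist n t u ^ 2 <= vertex_sqdist (INR n * dP t u).
Proof.
  rewrite pdist_dP, pdist_sqdist, pow2_sqrt by apply sqdist_ge0.
  rewrite Rmult_plus_distr_l; apply sqdist_polygon_le_vertex.
Qed.

Lemma vertex_sqdist_ivt (L R2 : R) :
  0 <= L -> 0 <= R2 <= vertex_sqdist (INR n * L) ->
  exists z, 0 <= z <= L /\ vertex_sqdist (INR n * z) = R2.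
Proof.
  intros HL HR2.
  assert (H0 : vertex_sqdist (INR n * 0) = 0)
    by (unfold vertex_sqdist, sqdist; rewrite Rmult_0_r; ring).
  destruct (IVT_gen (fun z => vertex_sqdist (INR n * z)) 0 L R2 vertex_sqdist_continuous)
    as [z [Hz Hzr]].
  { rewrite H0, Rmin_left, Rmax_right; lra. }
  rewrite Rmin_left, Rmax_right in Hz by lra.
  exists z; split; assumption.
Qed.

Lemma vertex_arc_point (k : nat) (z : R) :
  0 <= z < 1 ->
  exists w, in_P w /\ dP (INR k / INR n) w = z /\
            pdist n (INR k / INR n) w = sqrt (vertex_sqdist (INR n * z)).
Proof.
  intros Hz; set (v := INR k / INR n).
  exists (frac (v + z)); split; [apply frac_bounds|split].
  - unfold dP, frac at 2.
    replace (v + z - IZR (Int_part (v + z)) - v) with (z + IZR (- Int_part (v + z)))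
      by (rewrite opp_IZR; ring).
    rewrite frac_add_int; apply frac_id, Hz.
  - rewrite <- (pdist_add_int v (frac (v + z)) (Int_part (v + z))).
    replace (frac (v + z) + IZR (Int_part (v + z))) with (v + z) by (unfold frac; ring).
    rewrite pdist_sqdist, Rmult_plus_distr_l.
    replace (INR n * v) with (IZR (Z.of_nat k))
      by (unfold v; rewrite <- INR_IZR_INZ; field; lra).
    rewrite sqdist_from_vertex; reflexivity.
Qed.

End Polygon.

Theorem lemma5p4 (n : nat) (r : R) (k : nat) (p gv gp : R) :
  (3 <= n)%nat ->
  0 < r -> Rbar_lt (Finite r) (r_crit n) ->
  (k < n)%nat ->
  in_P p ->
  is_g n r (INR k / INR n) gv ->
  is_g n r p gp ->
  dP (INR k / INR n) gv <= dP p gp.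
Proof.
  intros Hn3 Hr _ _ _ [_ [_ Hgv_min]] [_ [Hgp_r _]].
  assert (Hn : (0 < n)%nat) by lia.
  pose proof (frac_bounds (gp - p)) as HL; fold (dP p gp) in HL.
  assert (HrL : 0 <= r ^ 2 <= vertex_sqdist n (INR n * dP p gp)).
  { split; [apply pow2_ge_0|]; rewrite <- Hgp_r; apply pdist_sqr_le_vertex, Hn. }
  destruct (vertex_sqdist_ivt n (dP p gp) (r ^ 2) (proj1 HL) HrL) as [z [Hz Hzr]].
  destruct (vertex_arc_point n Hn k z) as [w [Hw [Hvw Hdw]]]; [lra|].
  rewrite Hzr, sqrt_pow2 in Hdw by lra.
  apply Rle_trans with z; [rewrite <- Hvw; apply Hgv_min; assumption | lra].
Qed.
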